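(* Let $\mathfrak a$ be a commutative $n$-ary superalgebra, invariant with respect to an even non-degenerate skew-symmetric form, which is irreducible and not simple. Let $\mathfrak i$ be a maximal non-trivial ideal and $\mathfrak h$ an isotropic $n$-ary subalgebra of $\mathfrak a$ such that $\mathfrak a=\mathfrak i\oplus\mathfrak h$. Then $\mathfrak a$ is isomorphic to a certain generalized double extension (of some commutative invariant $n$-ary superalgebra $\mathfrak g$ by $\mathfrak h$ via some $\psi_1,\dots,\psi_{n+1}$) with $\psi_n=\psi_{n+1}=0$; such a generalized double extension is called a double extension.
   Context: $\mathbb K=\mathbb R$ or $\mathbb C$; spaces are finite-dimensional $\mathbb Z_2$-graded, $\bar a$ is parity. The form $(\,,)$ is even and skew-symmetric in the super sense, $(a,b)=-(-1)^{\bar a\bar b}(b,a)$. An $n$-ary superalgebra is a space with an $n$-linear map $\{\,\}$; commutative: $\{\dots,a_i,a_{i+1},\dots\}=(-1)^{\bar a_i\bar a_{i+1}}\{\dots,a_{i+1},a_i,\dots\}$; invariant: $(a_0,\{a_1,\dots,a_n\})=(-1)^{\bar a_0\bar a_1}(a_1,\{a_0,a_2,\dots,a_n\})$. Subalgebra: subspace $\mathfrak b$ with $\{\mathfrak b,\dots,\mathfrak b\}\subset\mathfrak b$. Ideal: subspace $\mathfrak i$ with $\{\mathfrak a,\dots,\mathfrak a,\mathfrak i\}\subset\mathfrak i$. Simple: not trivial one-dimensional and no proper ideals. Irreducible: not a direct sum of two ideals on which the form is non-degenerate. Derived potential: $S^*V$ (for $V$ with such a form) carries the Poisson bracket with $[x,y]=(x,y)$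 on $V$, $[v,w_1w_2]=[v,w_1]w_2+(-1)^{\bar v\bar w_1}w_1[v,w_2]$, $[v,w]=-(-1)^{\bar v\bar w}[w,v]$; for $\mu\in S^{n+1}V$, $\{a_1,\dots,a_n\}=[a_1,[\dots,[a_n,\mu]\dots]]$ is a commutative invariant $n$-ary superalgebra, and every such structure arises this way ($\mu$ = derived potential). Generalized double extension: given a commutative invariant $n$-ary superalgebra $\mathfrak g$ with derived potential $\mu\in S^{n+1}\mathfrak g$ and a commutative $n$-ary superalgebra $\mathfrak h$ with multiplication $\nu\in S^n\mathfrak h^*\otimes\mathfrak h\cong S^n\mathfrak h^*\cdot\mathfrak h\subset S^*(\mathfrak h\oplus\mathfrak h^* )$, where $\mathfrak h\oplus\mathfrak h^*$ has the form with $\mathfrak h,\mathfrak h^*$ isotropic, $(\alpha,x)=\alpha(x)$, $(x,\alpha)=-(-1)^{\bar\alpha\bar x}\alpha(x)$; on $\mathfrak d=\mathfrak g\oplus\mathfrak h\oplus\mathfrak h^*$ (orthogonal sum of forms) the commutative invariant $n$-ary superalgebra with derived potential $\mu+\nu+\sum_{i=1}^{n+1}\psi_i$, $\psi_i\in S^i\mathfrak h^*\cdot S^{n-i+1}\mathfrak g$, is the generalized double extension of $\mathfrak g$ by $\mathfrak h$ via the $\psi_i$. *)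

(* Finite-dimensional super vector spaces are modelled in
   coordinates: a super space of dimension (p|q) is  'rV_p * 'rV_q
   (even part, odd part). *)
From HB Require Import structures.
From mathcomp Require Import all_boot all_order all_algebra all_fingroup.
Set Implicit Arguments. Unset Strict Implicit. Unset Printing Implicit Defensive.
Import Order.TTheory GRing.Theory Num.Theory.
Local Open Scope ring_scope.

Section Super.
Variable K : fieldType.

Definition SV (p q : nat) := ('rV[K]_p * 'rV[K]_q)%type.

Definition hom (p q : nat) (b : bool) (x : SV p q) : bool :=
  if b then x.1 == 0 else x.2 == 0.

Definition sgn (b : bool) : K := (-1) ^+ b.

Definition homs (p q k : nat) (pa : 'I_k -> bool) (a : 'I_k -> SV p q) :=
  forall i, hom (pa i) (a i).

Section Space.
Variables p q : nat.
Local Notation V := (SV p q).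

Definition bilinear_form (B : V -> V -> K) :=
  (forall x c y z, B x (c *: y + z) = c * B x y + B x z) /\
  (forall z c x y, B (c *: x + y) z = c * B x z + B y z).

Definition even_form (B : V -> V -> K) :=
  forall x y, hom false x -> hom true y -> B x y = 0 /\ B y x = 0.

Definition superskew (B : V -> V -> K) :=
  forall (ba bb : bool) x y, hom ba x -> hom bb y ->
    B x y = - (sgn (ba && bb) * B y x).

Definition nondegenerate (B : V -> V -> K) :=
  forall x, (forall y, B x y = 0) -> x = 0.

Definition superform (B : V -> V -> K) :=
  [/\ bilinear_form B, even_form B, superskew B & nondegenerate B].

Definition upd (k : nat) (a : 'I_k -> V) (i : 'I_k) (x : V) : 'I_k -> V :=
  fun j => if j == i then x else a j.

Definition multilinear (n : nat) (m : ('I_n -> V) -> V) :=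
  forall a i c x y, m (upd a i (c *: x + y)) = c *: m (upd a i x) + m (upd a i y).

Definition supercommutative (n : nat) (m : ('I_n -> V) -> V) :=
  forall (pa : 'I_n -> bool) (a : 'I_n -> V), homs pa a ->
  forall i j : 'I_n, val j = (val i).+1 ->
    m (a \o (tperm i j : {perm 'I_n})) = sgn (pa i && pa j) *: m a.

Definition tl (n : nat) (b : 'I_n.+1 -> V) : 'I_n -> V := fun i => b (lift ord0 i).

Definition invariant (n : nat) (B : V -> V -> K) (m : ('I_n -> V) -> V) :=
  forall (pb : 'I_n.+1 -> bool) (b : 'I_n.+1 -> V), homs pb b ->
    let i1 : 'I_n.+1 := inord 1 in
    B (b ord0) (m (tl b)) =
    sgn (pb ord0 && pb i1) * B (b i1) (m (tl (b \o (tperm ord0 i1 : {perm 'I_n.+1})))).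

Definition comm_alg (n : nat) (m : ('I_n -> V) -> V) :=
  multilinear m /\ supercommutative m.

Definition comm_inv_alg (n : nat) (B : V -> V -> K) (m : ('I_n -> V) -> V) :=
  [/\ superform B, comm_alg m & invariant B m].

Definition graded (S : {vspace V}) :=
  forall x : V, x \in S -> ((x.1, 0) : V) \in S /\ ((0, x.2) : V) \in S.

Definition subalgebra (n : nat) (m : ('I_n -> V) -> V) (S : {vspace V}) :=
  graded S /\ forall a : 'I_n -> V, (forall i, a i \in S) -> m a \in S.

Definition ideal (n : nat) (m : ('I_n -> V) -> V) (S : {vspace V}) :=
  graded S /\
  forall a : 'I_n -> V, (forall i : 'I_n, val i = n.-1 -> a i \in S) -> m a \in S.

Definition proper_ideal (n : nat) (m : ('I_n -> V) -> V) (S : {vspace V}) :=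
  [/\ ideal m S, S != 0%VS & S != fullv].

Definition maximal_nontrivial_ideal (n : nat) (m : ('I_n -> V) -> V) (S : {vspace V}) :=
  proper_ideal m S /\
  forall T : {vspace V}, ideal m T -> (S <= T)%VS -> T = S \/ T = fullv.

Definition trivial_one_dim (n : nat) (m : ('I_n -> V) -> V) :=
  (p + q)%N = 1%N /\ forall a, m a = 0.

Definition simple_alg (n : nat) (m : ('I_n -> V) -> V) :=
  ~ trivial_one_dim m /\ forall S, ~ proper_ideal m S.

Definition nondeg_on (B : V -> V -> K) (S : {vspace V}) :=
  forall x, x \in S -> (forall y, y \in S -> B x y = 0) -> x = 0.

Definition irreducible_alg (n : nat) (B : V -> V -> K) (m : ('I_n -> V) -> V) :=
  ~ exists S T : {vspace V},
      [/\ ideal m S /\ ideal m T, S != 0%VS /\ T != 0%VS,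
          (S + T)%VS = fullv, (S :&: T)%VS = 0%VS & nondeg_on B S /\ nondeg_on B T].

Definition isotropic (B : V -> V -> K) (S : {vspace V}) :=
  forall x y, x \in S -> y \in S -> B x y = 0.

End Space.

(* ---- the space  d = g (+) h (+) h^*  ---- *)
Section DoubleExt.
Variables pg qg ph qh : nat.
Local Notation G := (SV pg qg).
Local Notation H := (SV ph qh).   (* h, and also h^* via the dual coordinates *)
Local Notation D := (SV (pg + (ph + ph)) (qg + (qh + qh))).

Definition inG (x : G) : D := (row_mx x.1 0, row_mx x.2 0).
Definition inH (x : H) : D := (row_mx 0 (row_mx x.1 0), row_mx 0 (row_mx x.2 0)).
(* an element alpha of h^* given by its coordinates in the dual basis *)
Definition inHs (x : H) : D := (row_mx 0 (row_mx 0 x.1), row_mx 0 (row_mx 0 x.2)).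

Definition prG (u : D) : G := (lsubmx u.1, lsubmx u.2).
Definition prH (u : D) : H := (lsubmx (rsubmx u.1), lsubmx (rsubmx u.2)).
Definition prHs (u : D) : H := (rsubmx (rsubmx u.1), rsubmx (rsubmx u.2)).

Definition dotr (k : nat) (u v : 'rV[K]_k) : K := (u *m v^T) 0 0.

Definition pairing (alpha x : H) : K := dotr alpha.1 x.1 + dotr alpha.2 x.2.

(* orthogonal sum of the form of g and the form on h (+) h^* with h, h^*
   isotropic, (alpha,x) = alpha(x), (x,alpha) = -(-1)^{|alpha||x|} alpha(x) *)
Definition dform (Bg : G -> G -> K) (u v : D) : K :=
  Bg (prG u) (prG v)
  + pairing (prHs u) (prH v)
  + (- dotr (prHs v).1 (prH u).1 + dotr (prHs v).2 (prH u).2).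

(* component tags of an argument: 0 = g, 1 = h, 2 = h^* *)
Definition compD (t : 'I_3) (xg : G) (xh xs : H) : D :=
  if val t == 0%N then inG xg else if val t == 1%N then inH xh else inHs xs.

Definition cnt (k : nat) (t : 'I_k -> 'I_3) (c : nat) : nat :=
  \sum_(j < k) (val (t j) == c : nat).

(* The (n+1)-linear invariant form  (a_0,{a_1,..,a_n})  of d; it is the
   (n+1)-linear form corresponding to the derived potential. *)
Definition potD (n : nat) (Bg : G -> G -> K) (md : ('I_n -> D) -> D) (b : 'I_n.+1 -> D) :=
  dform Bg (b ord0) (md (tl b)).

(* md is the multiplication of a generalized double extension of (g,Bg,mg)
   by (h,nu): its derived potential is  mu + nu + sum_{i=1}^{n+1} psi_i
   with mu the derived potential of g, nu in S^n h^* . h and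
   psi_i in S^i h^* . S^{n-i+1} g.  Componentwise (S^k modelled as
   super-symmetric k-linear forms) this means: *)
Definition gen_double_ext (n : nat) (Bg : G -> G -> K) (mg : ('I_n -> G) -> G)
  (nu : ('I_n -> H) -> H) (md : ('I_n -> D) -> D) :=
  [/\ comm_inv_alg Bg mg /\ comm_alg nu, comm_inv_alg (dform Bg) md,
      (forall x : 'I_n.+1 -> G,
          potD Bg md (inG \o x) = Bg (x ord0) (mg (tl x))),
      (forall (alpha : H) (y : 'I_n -> H),
          dform Bg (inHs alpha) (md (inH \o y)) = pairing alpha (nu y)) &
      (* every argument pattern involving h^* other than (h^*, h, ..., h)
         gets contributions neither from mu nor from nu nor from the psi_i *)
      (forall (t : 'I_n.+1 -> 'I_3) xg xh xs,
          (0 < cnt t 2)%N -> ~ (cnt t 2 = 1%N /\ cnt t 1 = n) ->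
          potD Bg md (fun j => compD (t j) (xg j) (xh j) (xs j)) = 0)].

(* psi_i is the restriction of the potential to patterns with i arguments
   in h and n+1-i in g; a double extension has psi_n = psi_{n+1} = 0 *)
Definition psi_vanish (n : nat) (Bg : G -> G -> K) (md : ('I_n -> D) -> D) (i : nat) :=
  forall (t : 'I_n.+1 -> 'I_3) xg xh xs,
    cnt t 2 = 0%N -> cnt t 1 = i ->
    potD Bg md (fun j => compD (t j) (xg j) (xh j) (xs j)) = 0.

Definition double_ext (n : nat) (Bg : G -> G -> K) (mg : ('I_n -> G) -> G)
  (nu : ('I_n -> H) -> H) (md : ('I_n -> D) -> D) :=
  [/\ gen_double_ext Bg mg nu md, psi_vanish Bg md n & psi_vanish Bg md n.+1].

End DoubleExt.

Definition alg_iso (n p q p' q' : nat)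
  (B : SV p q -> SV p q -> K) (m : ('I_n -> SV p q) -> SV p q)
  (B' : SV p' q' -> SV p' q' -> K) (m' : ('I_n -> SV p' q') -> SV p' q')
  (phi : SV p q -> SV p' q') :=
  [/\ (forall c x y, phi (c *: x + y) = c *: phi x + phi y),
      bijective phi,
      (forall b x, hom b x -> hom b (phi x)),
      (forall a, phi (m a) = m' (phi \o a)) &
      (forall x y, B' (phi x) (phi y) = B x y)].

End Super.

(* Let F := I^perp.  Since I is a maximal ideal of an irreducible algebra, F is an ideal
   contained in I (otherwise a = I (+) F would split into two nondegenerate ideals), and
   F^perp = I.  The form pairs F nondegenerately with the isotropic complement h, so a
   homogeneous basis of h has a dual basis in F, which identifies F with h^*; together
   with g := (F + h)^perp, contained in I, this decomposes a as g (+) h (+) h^*, and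
   transporting the multiplication along this decomposition gives a generalized double
   extension of g by h.
   Up to sign, the potential (a_0, {a_1, ..., a_n}) is invariant under transpositions of
   homogeneous arguments.  Hence it vanishes as soon as one argument lies in F and another
   one in I, because {.., I} is contained in I, which is orthogonal to F: among the
   argument patterns involving h^*, only (h^*, h, ..., h) survives.  It also vanishes when
   all arguments but one lie in h and the remaining one lies in g + h, because h is an
   isotropic subalgebra orthogonal to g: this is psi_n = psi_(n+1) = 0. *)

From HB Require Import structures.
From mathcomp Require Import all_boot all_order all_algebra all_fingroup zify ring.
From Stdlib Require Import FunctionalExtensionality.
Import GRing.Theory.
Set Implicit Arguments. Unset Strict Implicit. Unset Printing Implicit Defensive.
Local Open Scope ring_scope.

Lemma linfun_linE (R : fieldType) (aT rT : vectType R) (f : aT -> rT) :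
  linear f -> forall x, linfun f x = f x.
Proof.
move=> lin_f x.
exact: (lfunE (HB.pack f (GRing.isLinear.Build R aT rT _ f lin_f)) x).
Qed.

Lemma linear_fun0 (R : pzRingType) (U W : lmodType R) (f : U -> W) : linear f -> f 0 = 0.
Proof.
move=> f_lin; apply: (@addrI _ (f 0)).
by rewrite addr0 -{1}[f 0]scale1r -f_lin scale1r addr0.
Qed.

Lemma linear_funZ (R : pzRingType) (U W : lmodType R) (f : U -> W) c x :
  linear f -> f (c *: x) = c *: f x.
Proof. by move=> f_lin; rewrite -[c *: x]addr0 f_lin linear_fun0 ?addr0. Qed.

Lemma inj_surj_bij (T : choiceType) (U : eqType) (f : T -> U) :
  injective f -> (forall y, exists x, f x = y) -> bijective f.
Proof.
move=> f_inj f_surj; have ex y : exists x, f x == y by have [x <-] := f_surj y; exists x.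
by exists (fun y => xchoose (ex y)) => [x|y]; [apply: f_inj|]; apply/eqP/(xchooseP (ex _)).
Qed.

Section SuperVectors.
Variables (K : fieldType) (p q : nat).
Local Notation V := (SV K p q).

Definition evp (x : V) : V := (x.1, 0).
Definition odp (x : V) : V := (0, x.2).

Lemma evp_add_odp (x : V) : evp x + odp x = x.
Proof. by apply: injective_projections; rewrite /= ?addr0 ?add0r. Qed.

Lemma hom_evp (x : V) : hom false (evp x). Proof. by rewrite /hom /=. Qed.
Lemma hom_odp (x : V) : hom true (odp x). Proof. by rewrite /hom /=. Qed.

Lemma evp_even (x : V) : hom false x -> evp x = x.
Proof. by case: x => a b /eqP /= ->. Qed.
Lemma odp_odd (x : V) : hom true x -> odp x = x.
Proof. by case: x => a b /eqP /= ->. Qed.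
Lemma odp_even (x : V) : hom false x -> odp x = 0.
Proof. by case: x => a b /eqP /= ->. Qed.
Lemma evp_odd (x : V) : hom true x -> evp x = 0.
Proof. by case: x => a b /eqP /= ->. Qed.

Lemma evp_is_linear : linear evp.
Proof. by move=> c x y; apply: injective_projections; rewrite /= ?scaler0 ?addr0. Qed.
Lemma odp_is_linear : linear odp.
Proof. by move=> c x y; apply: injective_projections; rewrite /= ?scaler0 ?addr0. Qed.

Lemma hom_lin b c (x y : V) : hom b x -> hom b y -> hom b (c *: x + y).
Proof. by case: b => /eqP hx /eqP hy; rewrite /hom /= hx hy scaler0 addr0. Qed.

Lemma hom0 b : hom b (0 : V).
Proof. by case: b; rewrite /hom /=. Qed.

Lemma homD b (x y : V) : hom b x -> hom b y -> hom b (x + y).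
Proof. by rewrite -{2}[x]scale1r; apply: hom_lin. Qed.

Lemma hom_sum b (I : finType) (P : pred I) (F : I -> V) :
  (forall i, P i -> hom b (F i)) -> hom b (\sum_(i | P i) F i).
Proof. by move=> homF; elim/big_rec: _ => [|i x /homF]; [apply: hom0 | apply: homD]. Qed.

Lemma hom_even_odd (x : V) : hom false x -> hom true x -> x = 0.
Proof. by case: x => a b /eqP /= -> /eqP ->. Qed.

Lemma graded_evp (S : {vspace V}) x : graded S -> x \in S -> evp x \in S.
Proof. by move=> gS /gS []. Qed.
Lemma graded_odp (S : {vspace V}) x : graded S -> x \in S -> odp x \in S.
Proof. by move=> gS /gS []. Qed.

Lemma gradedD (S T : {vspace V}) : graded S -> graded T -> graded (S + T)%VS.
Proof.
move=> gS gT _ /memv_addP [u uS [v vT ->]].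
have -> : ((u + v).1, 0) = evp u + evp v by apply: injective_projections; rewrite /= ?addr0.
have -> : (0, (u + v).2) = odp u + odp v by apply: injective_projections; rewrite /= ?addr0.
by split; apply: memv_add; rewrite ?graded_evp ?graded_odp.
Qed.

Lemma graded_fullv : graded (fullv : {vspace V}).
Proof. by move=> x _; rewrite !memvf. Qed.

End SuperVectors.

Section Forms.
Variables (K : fieldType) (p q : nat).
Local Notation V := (SV K p q).
Variable B : V -> V -> K.
Hypothesis hB : bilinear_form B.

Lemma formDr x y z : B x (y + z) = B x y + B x z.
Proof. by have := hB.1 x 1 y z; rewrite scale1r mul1r. Qed.
Lemma formDl x y z : B (x + y) z = B x z + B y z.
Proof. by have := hB.2 z 1 x y; rewrite scale1r mul1r. Qed.
Lemma form0r x : B x 0 = 0.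
Proof. by apply: (@addrI _ (B x 0)); rewrite -formDr !addr0. Qed.
Lemma form0l x : B 0 x = 0.
Proof. by apply: (@addrI _ (B 0 x)); rewrite -formDl !addr0. Qed.
Lemma formZr x c y : B x (c *: y) = c * B x y.
Proof. by have := hB.1 x c y 0; rewrite addr0 form0r addr0. Qed.
Lemma formZl x c y : B (c *: x) y = c * B x y.
Proof. by have := hB.2 y c x 0; rewrite addr0 form0l addr0. Qed.
Lemma formNl x y : B (- x) y = - B x y.
Proof. by rewrite -scaleN1r formZl mulN1r. Qed.
Lemma formBl x y z : B (x - y) z = B x z - B y z.
Proof. by rewrite formDl formNl. Qed.

Lemma form_sumr (I : finType) (P : pred I) (F : I -> V) x :
  B x (\sum_(i | P i) F i) = \sum_(i | P i) B x (F i).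
Proof. by elim/big_rec2: _ => [|i y1 y2 _ <-]; rewrite ?form0r ?formDr. Qed.
Lemma form_suml (I : finType) (P : pred I) (F : I -> V) x :
  B (\sum_(i | P i) F i) x = \sum_(i | P i) B (F i) x.
Proof. by elim/big_rec2: _ => [|i y1 y2 _ <-]; rewrite ?form0l ?formDl. Qed.

Hypothesis hE : even_form B.

Lemma form_parity x y : B x y = B (evp x) (evp y) + B (odp x) (odp y).
Proof.
rewrite -{1}(evp_add_odp x) -{1}(evp_add_odp y) !formDl !formDr.
rewrite (hE (hom_evp x) (hom_odp y)).1 (hE (hom_evp y) (hom_odp x)).2.
by rewrite addr0 add0r.
Qed.

Lemma form_evenl x y : hom false x -> B x y = B x (evp y).
Proof. by move=> ex; rewrite form_parity (odp_even ex) form0l addr0 (evp_even ex). Qed.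
Lemma form_oddl x y : hom true x -> B x y = B x (odp y).
Proof. by move=> ox; rewrite form_parity (evp_odd ox) form0l add0r (odp_odd ox). Qed.
Lemma form_evenr x y : hom false y -> B x y = B (evp x) y.
Proof. by move=> ey; rewrite form_parity (odp_even ey) form0r addr0 (evp_even ey). Qed.
Lemma form_oddr x y : hom true y -> B x y = B (odp x) y.
Proof. by move=> oy; rewrite form_parity (evp_odd oy) form0r add0r (odp_odd oy). Qed.

Hypothesis hS : superskew B.

Lemma orthl_of_orthr (S : {vspace V}) x : graded S ->
  (forall s, s \in S -> B x s = 0) -> forall s, s \in S -> B s x = 0.
Proof.
move=> gS orth_x s sS.
rewrite form_parity (hS (hom_evp s) (hom_evp x)).
rewrite (hS (hom_odp s) (hom_odp x)).
rewrite -(form_evenr _ (hom_evp s)) -(form_oddr _ (hom_odp s)).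
by rewrite !orth_x ?graded_evp ?graded_odp // !mulr0 oppr0 addr0.
Qed.

Lemma orthr_of_orthl (S : {vspace V}) x : graded S ->
  (forall s, s \in S -> B s x = 0) -> forall s, s \in S -> B x s = 0.
Proof.
move=> gS orth_x s sS.
rewrite form_parity (hS (hom_evp x) (hom_evp s)).
rewrite (hS (hom_odp x) (hom_odp s)).
rewrite -(form_evenl _ (hom_evp s)) -(form_oddl _ (hom_odp s)).
by rewrite !orth_x ?graded_evp ?graded_odp // !mulr0 oppr0 addr0.
Qed.

Lemma form_even_skew x z : hom false x -> B x z = - B z x.
Proof.
move=> ex; rewrite (form_evenl _ ex) (hS ex (hom_evp z)) -(form_evenr _ ex).
by rewrite /sgn andbF expr0 mul1r.
Qed.

Lemma form_odd_sym x z : hom true x -> B x z = B z x.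
Proof.
move=> ox; rewrite (form_oddl _ ox) (hS ox (hom_odp z)) -(form_oddr _ ox).
by rewrite /sgn andbT expr1 mulN1r opprK.
Qed.

End Forms.

Section Orthogonal.
Variables (K : fieldType) (p q : nat).
Local Notation V := (SV K p q).
Variable B : V -> V -> K.
Hypothesis hB : bilinear_form B.

Definition perpv (S : {vspace V}) : {vspace V} :=
  lker (linfun (fun x : V => \row_(i < \dim S) B x (vbasis S)`_i)).

Lemma perpvP (S : {vspace V}) x : reflect (forall s, s \in S -> B x s = 0) (x \in perpv S).
Proof.
rewrite memv_ker linfun_linE; last first.
  by move=> a u v; apply/rowP => i; rewrite !mxE formDl // formZl.
apply: (iffP eqP) => [/rowP orth_x s sS | orth_x].
  rewrite (coord_vbasis sS) form_sumr //; apply: big1 => i _.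
  by have := orth_x i; rewrite !mxE formZr // => ->; rewrite mulr0.
by apply/rowP => i; rewrite !mxE orth_x // vbasis_mem // mem_nth // size_tuple.
Qed.

Hypothesis hN : nondegenerate B.

Lemma dim_perpv (S : {vspace V}) : \dim (perpv S) = (\dim (fullv : {vspace V}) - \dim S)%N.
Proof.
have lb T : (\dim (fullv : {vspace V}) - \dim T <= \dim (perpv T))%N.
  pose f := linfun (fun x : V => \row_(i < \dim T) B x (vbasis T)`_i).
  have := limg_ker_dim f fullv; rewrite capfv /perpv -/f => <-.
  have : (\dim (f @: fullv) <= \dim T)%N.
    by apply: leq_trans (dimvS (subvf _)) _; rewrite dimvf dim_matrix mul1r.
  by rewrite leq_subLR addnC leq_add2r.
have cap0 : (perpv S :&: perpv S^C%VS = 0)%VS.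
  apply/eqP; rewrite -subv0; apply/subvP => x /memv_capP [/perpvP xS /perpvP xSC].
  rewrite memv0; apply/eqP/hN => y.
  have /memv_addP [u uS [v vSC ->]] : y \in (S + S^C)%VS by rewrite addv_complf memvf.
  by rewrite formDr // xS // xSC // addr0.
have := dimv_disjoint_sum cap0; have := dimvS (subvf (perpv S + perpv S^C%VS)%VS).
have := lb S; have := lb S^C%VS; rewrite dimv_compl; have := dimvS (subvf S).
move: (\dim _) (\dim (perpv S)) (\dim (perpv _)) (\dim S) (\dim (_ + _)%VS) => N a b s c.
lia.
Qed.

Hypothesis hE : even_form B.

Lemma perpv_graded (S : {vspace V}) : graded S -> graded (perpv S).
Proof.
move=> gS x /perpvP orth_x; split; apply/perpvP => s sS.
  rewrite (form_evenl hB hE _ (hom_evp _)) -(form_evenr hB hE _ (hom_evp _)).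
  by rewrite orth_x ?graded_evp.
rewrite (form_oddl hB hE _ (hom_odp _)) -(form_oddr hB hE _ (hom_odp _)).
by rewrite orth_x ?graded_odp.
Qed.

Hypothesis hS : superskew B.

Lemma perpv_orthl (S : {vspace V}) x s : graded S -> x \in perpv S -> s \in S -> B s x = 0.
Proof. by move=> gS /perpvP orth_x; apply: (orthl_of_orthr hB hE hS gS orth_x). Qed.

Lemma perpvK (S : {vspace V}) : graded S -> perpv (perpv S) = S.
Proof.
move=> gS; apply/eqP; rewrite eq_sym eqEdim; apply/andP; split.
  by apply/subvP => x xS; apply/perpvP => f /perpv_orthl; apply.
by rewrite !dim_perpv subKn // dimvS ?subvf.
Qed.

End Orthogonal.

Section Combinations.
Variables (K : fieldType) (p q : nat).
Local Notation V := (SV K p q).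

Definition lcomb k (c : 'rV[K]_k) (w : 'I_k -> V) : V := \sum_i c 0 i *: w i.

Definition scomb k1 k2 (x : SV K k1 k2) (we : 'I_k1 -> V) (wo : 'I_k2 -> V) : V :=
  lcomb x.1 we + lcomb x.2 wo.

Lemma lcomb_is_linear k (w : 'I_k -> V) : linear (fun c : 'rV[K]_k => lcomb c w).
Proof.
move=> a c d; rewrite /lcomb scaler_sumr -big_split /=; apply: eq_bigr => i _.
by rewrite !mxE scalerDl scalerA.
Qed.

Lemma lcomb0 k (w : 'I_k -> V) : lcomb 0 w = 0.
Proof. by apply: big1 => i _; rewrite mxE scale0r. Qed.

Lemma memv_lcomb k (c : 'rV[K]_k) (w : 'I_k -> V) (S : {vspace V}) :
  (forall i, w i \in S) -> lcomb c w \in S.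
Proof. by move=> wS; apply: memv_suml => i _; apply: memvZ. Qed.

Lemma hom_lcomb k b (c : 'rV[K]_k) (w : 'I_k -> V) :
  (forall i, hom b (w i)) -> hom b (lcomb c w).
Proof. by move=> hw; apply: hom_sum => i _; rewrite -[_ *: _]addr0 hom_lin ?hom0. Qed.

Section Families.
Variables (k1 k2 : nat) (we : 'I_k1 -> V) (wo : 'I_k2 -> V).

Lemma scomb_is_linear : linear (fun x : SV K k1 k2 => scomb x we wo).
Proof.
move=> a x y; rewrite /scomb /= !lcomb_is_linear scalerDr.
by rewrite -!addrA; congr (_ + _); rewrite addrCA.
Qed.

Lemma scomb0 : scomb 0 we wo = 0.
Proof. by rewrite /scomb !lcomb0 addr0. Qed.

Lemma memv_scomb (S : {vspace V}) x :
  (forall i, we i \in S) -> (forall i, wo i \in S) -> scomb x we wo \in S.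
Proof. by move=> weS woS; rewrite memvD ?memv_lcomb. Qed.
Hypotheses (we_even : forall i, hom false (we i)) (wo_odd : forall i, hom true (wo i)).

Lemma hom_scomb b x : hom b x -> hom b (scomb x we wo).
Proof. by case: b => /eqP x0; rewrite /scomb x0 lcomb0 ?addr0 ?add0r; exact: hom_lcomb. Qed.

Lemma evp_scomb x : evp (scomb x we wo) = lcomb x.1 we.
Proof.
have /eqP even1 := hom_lcomb x.1 we_even; have /eqP odd2 := hom_lcomb x.2 wo_odd.
by apply: injective_projections; rewrite /= ?even1 ?odd2 ?addr0.
Qed.

Lemma odp_scomb x : odp (scomb x we wo) = lcomb x.2 wo.
Proof.
have /eqP even1 := hom_lcomb x.1 we_even; have /eqP odd2 := hom_lcomb x.2 wo_odd.
by apply: injective_projections; rewrite /= ?even1 ?odd2 ?add0r.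
Qed.

End Families.

Definition homogeneous_basis k1 k2 (we : 'I_k1 -> V) (wo : 'I_k2 -> V) (S : {vspace V}) :=
  [/\ forall i, we i \in S /\ hom false (we i),
      forall i, wo i \in S /\ hom true (wo i),
      forall y, y \in S -> exists x, scomb x we wo = y &
      forall x, scomb x we wo = 0 -> x = 0].

Lemma homogeneous_basis_graded k1 k2 (we : 'I_k1 -> V) (wo : 'I_k2 -> V) S :
  homogeneous_basis we wo S -> graded S.
Proof.
case=> weS woS spanS _ _ /spanS [x <-].
have we_even i := (weS i).2; have wo_odd i := (woS i).2.
change (evp (scomb x we wo) \in S /\ odp (scomb x we wo) \in S).
rewrite evp_scomb // odp_scomb //.
by split; apply: memv_suml => i _; rewrite memvZ ?(weS i).1 ?(woS i).1.
Qed.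

Lemma lcomb_coord (S : {vspace V}) y : y \in S ->
  lcomb (\row_i coord (vbasis S) i y) (fun i => (vbasis S)`_i) = y.
Proof.
by move=> yS; rewrite [RHS](coord_vbasis yS); apply: eq_bigr => i _; rewrite mxE.
Qed.

Lemma lcomb_vbasis_eq0 (S : {vspace V}) (c : 'rV[K]_(\dim S)) :
  lcomb c (fun i => (vbasis S)`_i) = 0 -> c = 0.
Proof.
move=> c0; apply/rowP => i; rewrite mxE.
by move/freeP: (basis_free (vbasisP S)) => /(_ (fun i => c 0 i) c0 i).
Qed.

Lemma homogeneous_basis_exists (S : {vspace V}) : graded S ->
  exists k1 k2 (we : 'I_k1 -> V) (wo : 'I_k2 -> V),
    homogeneous_basis we wo S /\ (k1 + k2)%N = \dim S.
Proof.
move=> gS.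
pose SE := (linfun (@evp K p q) @: S)%VS; pose SO := (linfun (@odp K p q) @: S)%VS.
have evpE := linfun_linE (@evp_is_linear K p q).
have odpE := linfun_linE (@odp_is_linear K p q).
have SEP x : x \in SE -> x \in S /\ hom false x.
  by case/memv_imgP => u uS ->; rewrite evpE graded_evp ?hom_evp.
have SOP x : x \in SO -> x \in S /\ hom true x.
  by case/memv_imgP => u uS ->; rewrite odpE graded_odp ?hom_odp.
have evp_SE y : y \in S -> evp y \in SE by rewrite -evpE; apply: memv_img.
have odp_SO y : y \in S -> odp y \in SO by rewrite -odpE; apply: memv_img.
pose we (i : 'I_(\dim SE)) := (vbasis SE)`_i.
pose wo (i : 'I_(\dim SO)) := (vbasis SO)`_i.
have weP i : we i \in S /\ hom false (we i) by apply/SEP/vbasis_mem/mem_nth; rewrite size_tuple.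
have woP i : wo i \in S /\ hom true (wo i) by apply/SOP/vbasis_mem/mem_nth; rewrite size_tuple.
exists (\dim SE), (\dim SO), we, wo; split; first split => //.
- move=> y yS; exists (\row_i coord (vbasis SE) i (evp y), \row_i coord (vbasis SO) i (odp y)).
  by rewrite /scomb !lcomb_coord ?evp_SE ?odp_SO ?evp_add_odp.
- move=> x x0; have := evp_scomb (fun i => (weP i).2) (fun i => (woP i).2) x.
  have := odp_scomb (fun i => (weP i).2) (fun i => (woP i).2) x.
  rewrite x0 /evp /odp /= => /esym/lcomb_vbasis_eq0 x2 /esym/lcomb_vbasis_eq0 x1.
  by apply: injective_projections; rewrite ?x1 ?x2.
have SEO0 : (SE :&: SO = 0)%VS.
  apply/eqP; rewrite -subv0; apply/subvP => x /memv_capP [/SEP [_ ex] /SOP [_ ox]].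
  by rewrite memv0 (hom_even_odd ex ox).
rewrite -dimv_disjoint_sum //; congr (\dim _); apply/eqP; rewrite eqEsubv.
apply/andP; split; apply/subvP => y.
  by case/memv_addP => u /SEP [uS _] [v /SOP [vS _] ->]; apply: memvD.
by move=> yS; rewrite -(evp_add_odp y) memv_add ?evp_SE ?odp_SO.
Qed.

Lemma dim_SV k1 k2 : \dim (fullv : {vspace SV K k1 k2}) = (k1 + k2)%N.
Proof. by rewrite dimvf /dim /= !dim_matrix !mul1r. Qed.

Section CombinationForms.
Variable B : V -> V -> K.
Hypothesis hB : bilinear_form B.

Lemma form_lcombl k (c : 'rV[K]_k) w y : B (lcomb c w) y = \sum_i c 0 i * B (w i) y.
Proof. by rewrite form_suml //; apply: eq_bigr => i _; rewrite formZl. Qed.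
Lemma form_lcombr k (c : 'rV[K]_k) w y : B y (lcomb c w) = \sum_i c 0 i * B y (w i).
Proof. by rewrite form_sumr //; apply: eq_bigr => i _; rewrite formZr. Qed.

Lemma form_scombl k1 k2 (x : SV K k1 k2) we wo y :
  B (scomb x we wo) y = \sum_i x.1 0 i * B (we i) y + \sum_i x.2 0 i * B (wo i) y.
Proof. by rewrite formDl // !form_lcombl. Qed.
Lemma form_scombr k1 k2 (x : SV K k1 k2) we wo y :
  B y (scomb x we wo) = \sum_i x.1 0 i * B y (we i) + \sum_i x.2 0 i * B y (wo i).
Proof. by rewrite formDr // !form_lcombr. Qed.

Lemma sum_row_delta k (c : 'rV[K]_k) j : \sum_i c 0 i * (i == j)%:R = c 0 j.
Proof. by rewrite (bigD1 j) //= eqxx mulr1 big1 ?addr0 // => i /negbTE ->; rewrite mulr0. Qed.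

Definition dual_families k1 k2 (fe he : 'I_k1 -> V) (fo ho : 'I_k2 -> V) :=
  [/\ forall i j, B (fe i) (he j) = (i == j)%:R,
      forall i j, B (fo i) (ho j) = (i == j)%:R,
      forall i j, B (fe i) (ho j) = 0 &
      forall i j, B (fo i) (he j) = 0].

Lemma form_scomb_dual k1 k2 (fe he : 'I_k1 -> V) (fo ho : 'I_k2 -> V) a :
  dual_families fe he fo ho ->
  (forall j, B (scomb a fe fo) (he j) = a.1 0 j) /\
  (forall j, B (scomb a fe fo) (ho j) = a.2 0 j).
Proof.
case=> dual_e dual_o fe_ho fo_he; split=> j; rewrite form_scombl.
  under eq_bigr => i _ do rewrite dual_e.
  by rewrite sum_row_delta big1 ?addr0 // => i _; rewrite fo_he mulr0.
under [X in _ + X]eq_bigr => i _ do rewrite dual_o.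
by rewrite sum_row_delta big1 ?add0r // => i _; rewrite fe_ho mulr0.
Qed.


Definition pairings k1 k2 (he : 'I_k1 -> V) (ho : 'I_k2 -> V) (f : V) : SV K k1 k2 :=
  (\row_j B f (he j), \row_j B f (ho j)).

Section Pairings.
Variables (k1 k2 : nat) (he : 'I_k1 -> V) (ho : 'I_k2 -> V).

Lemma pairings_is_linear : linear (pairings he ho).
Proof.
by move=> c x y; apply: injective_projections; apply/rowP => j; rewrite !mxE /= formDl // formZl.
Qed.

Lemma pairings_scomb_dual (fe : 'I_k1 -> V) (fo : 'I_k2 -> V) a :
  dual_families fe he fo ho -> pairings he ho (scomb a fe fo) = a.
Proof.
move=> /(form_scomb_dual a) [scomb_he scomb_ho].
by apply: injective_projections; apply/rowP => j; rewrite mxE ?scomb_he ?scomb_ho.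
Qed.

Variable F : {vspace V}.
Hypothesis F_pairings_inj : forall f, f \in F ->
  (forall j, B f (he j) = 0) -> (forall j, B f (ho j) = 0) -> f = 0.

Lemma pairings_inj f : f \in F -> pairings he ho f = 0 -> f = 0.
Proof.
move=> fF pf0; apply: F_pairings_inj => // j.
  by have := congr1 (fun x : SV K k1 k2 => x.1 0 j) pf0; rewrite /= !mxE.
by have := congr1 (fun x : SV K k1 k2 => x.2 0 j) pf0; rewrite /= !mxE.
Qed.

Lemma pairings_onto : (k1 + k2)%N = \dim F ->
  exists2 pre : SV K k1 k2 -> V, forall r, pre r \in F & forall r, pairings he ho (pre r) = r.
Proof.
move=> dimF; have pairingsE := linfun_linE pairings_is_linear.
have ker0 : (F :&: lker (linfun (pairings he ho)) = 0)%VS.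
  apply/eqP; rewrite -subv0; apply/subvP => f /memv_capP [fF].
  by rewrite memv_ker pairingsE memv0 => /eqP /(pairings_inj fF) ->.
have onto : (linfun (pairings he ho) @: F)%VS = fullv.
  apply/eqP; rewrite eqEdim subvf /= dim_SV dimF.
  by have := limg_ker_dim (linfun (pairings he ho)) F; rewrite ker0 dimv0 add0n => ->.
have lift r : exists f, (f \in F) && (pairings he ho f == r).
  have /memv_imgP [f fF ->] : r \in (linfun (pairings he ho) @: F)%VS by rewrite onto memvf.
  by exists f; rewrite fF pairingsE eqxx.
by exists (fun r => xchoose (lift r)) => r; have /andP [? /eqP] := xchooseP (lift r).
Qed.

Hypothesis hE : even_form B.
Hypotheses (he_even : forall i, hom false (he i)) (ho_odd : forall i, hom true (ho i)).

Lemma dual_basis_exists : graded F -> (k1 + k2)%N = \dim F ->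
  exists (fe : 'I_k1 -> V) (fo : 'I_k2 -> V),
    homogeneous_basis fe fo F /\ dual_families fe he fo ho.
Proof.
move=> gF /pairings_onto [pre preF pre_pairings].
have pre_he r j : B (pre r) (he j) = r.1 0 j by rewrite -[in RHS](pre_pairings r) mxE.
have pre_ho r j : B (pre r) (ho j) = r.2 0 j by rewrite -[in RHS](pre_pairings r) mxE.
pose fe i := evp (pre (\row_j (i == j)%:R, 0)).
pose fo i := odp (pre (0, \row_j (i == j)%:R)).
have dual : dual_families fe he fo ho.
  split=> i j.
  - by rewrite -(form_evenr hB hE _ (he_even j)) pre_he mxE.
  - by rewrite -(form_oddr hB hE _ (ho_odd j)) pre_ho mxE.
  - exact: (hE (hom_evp _) (ho_odd j)).1.
  - exact: (hE (he_even j) (hom_odp _)).2.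
exists fe, fo; split => //; split.
- by move=> i; rewrite graded_evp ?hom_evp.
- by move=> i; rewrite graded_odp ?hom_odp.
- move=> f fF; exists (pairings he ho f); apply/eqP; rewrite -subr_eq0; apply/eqP/pairings_inj.
    by rewrite memvB // memv_scomb // => i; rewrite ?graded_evp ?graded_odp.
  by rewrite addrC -scaleN1r pairings_is_linear pairings_scomb_dual // scaleN1r addNr.
- move=> x x0; rewrite -(pairings_scomb_dual x dual) x0.
  by apply: injective_projections; apply/rowP => j; rewrite !mxE form0l.
Qed.

End Pairings.
End CombinationForms.
End Combinations.

Section Multilinear.
Variables (K : fieldType) (p q k : nat).
Local Notation V := (SV K p q).

Lemma upd_id (b : 'I_k -> V) i : upd b i (b i) = b.
Proof. by apply: functional_extensionality => j; rewrite /upd; case: eqP => // ->. Qed.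

Lemma multilinear_eq0_homogeneous (T : ('I_k -> V) -> K) (S : 'I_k -> {vspace V}) :
  (forall b i c x y, T (upd b i (c *: x + y)) = c * T (upd b i x) + T (upd b i y)) ->
  (forall i, graded (S i)) ->
  (forall pb b, homs pb b -> (forall i, b i \in S i) -> T b = 0) ->
  forall b, (forall i, b i \in S i) -> T b = 0.
Proof.
move=> T_lin gS T_hom.
suff T_eq0 l b : (forall i, b i \in S i) ->
    (forall i : 'I_k, (l <= i)%N -> hom false (b i) \/ hom true (b i)) -> T b = 0.
  by move=> b bS; apply: (T_eq0 k) => // i; rewrite leqNgt ltn_ord.
elim: l b => [|l IHl] b bS b_hom.
  apply: (T_hom (fun i => (b i).2 != 0)) => // i.
  case: (b_hom i isT) => /[dup] bi /eqP bi0; first by rewrite bi0 eqxx.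
  by rewrite /hom bi0; case: eqP => // _; rewrite eqxx.
have [lk | kl] := ltnP l k; last first.
  by apply: IHl => // i li; move: (leq_trans kl li); rewrite leqNgt ltn_ord.
pose i0 := Ordinal lk.
have T_upd x : x \in S i0 -> hom false x \/ hom true x -> T (upd b i0 x) = 0.
  move=> xS x_hom; apply: IHl => [i|i li]; rewrite /upd; case: eqP => [e|ne].
  - by rewrite e.
  - exact: bS.
  - exact: x_hom.
  - apply: b_hom; rewrite ltn_neqAle li andbT; apply/eqP => il.
    by apply: ne; apply: val_inj.
rewrite -(upd_id b i0) -(evp_add_odp (b i0)) -[evp _]scale1r T_lin mul1r.
by rewrite !T_upd ?addr0 ?graded_evp ?graded_odp ?hom_evp ?hom_odp; auto.
Qed.

End Multilinear.

Lemma sgnK (K : fieldType) b : sgn K b * sgn K b = 1.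
Proof. by case: b; rewrite /sgn ?expr0 ?expr1 ?mulr1 ?mulrNN ?mulr1. Qed.

Section Potential.
Variables (K : fieldType) (p q n : nat).
Local Notation V := (SV K p q).
Variables (B : V -> V -> K) (m : ('I_n -> V) -> V).

Definition potential (b : 'I_n.+1 -> V) : K := B (b ord0) (m (tl b)).

Definition rescales (s : {perm 'I_n.+1}) :=
  forall pb b, homs pb b -> exists c, potential (b \o s) = c * potential b.

Lemma rescales_mul s t : rescales s -> rescales t -> rescales (s * t)%g.
Proof.
move=> rs rt pb b hb.
have -> : b \o (s * t)%g = (b \o t) \o s.
  by apply: functional_extensionality => x /=; rewrite permM.
have [c1 ->] := rs (pb \o t) (b \o t) (fun i => hb (t i)).
have [c2 ->] := rt pb b hb.
by exists (c1 * c2); rewrite mulrA.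
Qed.

Hypothesis hB : bilinear_form B.
Hypothesis hC : supercommutative m.
Hypothesis hI : invariant B m.

Lemma rescales_tperm_adj (i j : 'I_n.+1) : val j = (val i).+1 -> rescales (tperm i j).
Proof.
move=> ij pb b hb.
case: (unliftP ord0 i) => [i' ->|->] in ij *; last first.
  have -> : j = inord 1 by apply: val_inj; rewrite /= inordK // -ij ltn_ord.
  exists (sgn K (pb ord0 && pb (inord 1))).
  by rewrite /potential (hI hb) /= tpermL mulrA sgnK mul1r.
case: (unliftP ord0 j) => [j' ej|ej]; rewrite ej in ij; last by [].
have ij' : val j' = (val i').+1 by move: ij; rewrite /= /bump /= !add1n => -[].
have tl_tperm : tl (b \o tperm (lift ord0 i') j) = tl b \o tperm i' j'.
  apply: functional_extensionality => x; rewrite /tl /= ej -inj_tperm //.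
  exact: lift_inj.
exists (sgn K (pb (lift ord0 i') && pb j)).
rewrite /potential tl_tperm (hC (fun i => hb (lift ord0 i)) ij') formZr //= ej.
by rewrite tpermD // eq_sym neq_lift.
Qed.

Lemma rescales_tperm_gap k (i j : 'I_n.+1) :
  j = (i + k.+1)%N :> nat -> rescales (tperm i j).
Proof.
elim: k j => [|k IHk] j ij.
  by apply: rescales_tperm_adj; rewrite -[val j]/(nat_of_ord j) ij addn1.
have lt_j' : (i + k.+1 < n.+1)%N by have := ltn_ord j; rewrite ij; lia.
pose j' := Ordinal lt_j'.
have -> : tperm i j = (tperm j' j * tperm i j' * tperm j' j)%g.
  by rewrite -mulgA -{1}(tpermV j' j) -conjgE tpermJ tpermL tpermD //;
    apply/eqP => /(congr1 (@nat_of_ord _)) /=; lia.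
have adj : rescales (tperm j' j).
  by apply: rescales_tperm_adj; rewrite -[val j]/(nat_of_ord j) ij addnS.
by apply: rescales_mul => //; apply: rescales_mul => //; apply: IHk.
Qed.

Lemma rescales_tperm (i j : 'I_n.+1) : rescales (tperm i j).
Proof.
wlog lt_ij : i j / (i < j)%N.
  move=> gen; case: (ltngtP i j) => [|lt_ji|/val_inj ->]; first exact: gen.
    by rewrite tpermC; apply: gen.
  rewrite tperm1 => pb b _; exists 1; rewrite mul1r; congr potential.
  by apply: functional_extensionality => x /=; rewrite perm1.
by apply: (rescales_tperm_gap (k := j - i - 1)); lia.
Qed.

Lemma potential_tperm_eq0 pb b (i j : 'I_n.+1) : homs pb b ->
  potential (b \o tperm i j) = 0 -> potential b = 0.
Proof.
move=> hb hb0; have [c e] := rescales_tperm i j (fun k => hb (tperm i j k)).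
have bK : (b \o tperm i j) \o tperm i j = b.
  by apply: functional_extensionality => x /=; rewrite tpermK.
by rewrite -bK e hb0 mulr0.
Qed.

Hypothesis hM : multilinear m.

Lemma potential_multilinear b i c x y :
  potential (upd b i (c *: x + y)) = c * potential (upd b i x) + potential (upd b i y).
Proof.
have tl_upd0 z : tl (upd b ord0 z) = tl b.
  by apply: functional_extensionality => k; rewrite /tl /upd eq_sym (negbTE (neq_lift _ _)).
have tl_updS i' z : tl (upd b (lift ord0 i') z) = upd (tl b) i' z.
  by apply: functional_extensionality => k; rewrite /tl /upd (inj_eq lift_inj).
rewrite /potential; case: (unliftP ord0 i) => [i' ->|->].
  by rewrite !tl_updS hM /upd (negbTE (neq_lift _ _)) hB.1.
by rewrite !tl_upd0 /upd eqxx hB.2.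
Qed.

Hypothesis hE : even_form B.

Lemma potential_perp_ideal_eq0 (I : {vspace V}) b (i j : 'I_n.+1) :
  (0 < n)%N -> ideal m I -> i != j -> b i \in perpv B I -> b j \in I -> potential b = 0.
Proof.
move=> n_gt0 [gI idI] ij bi bj.
have last_eq0 c : c ord0 \in perpv B I -> c ord_max \in I -> potential c = 0.
  move=> /(perpvP hB) c0 cmax; apply: c0; apply: idI => k kn; rewrite /tl.
  by have -> : lift ord0 k = ord_max by apply: val_inj; rewrite /= /bump /= kn; lia.
pose S l := if l == i then perpv B I else if l == j then I else fullv.
apply: (multilinear_eq0_homogeneous (S := S) potential_multilinear) => [l|pb c hc cS|l].
- rewrite /S; case: eqP => _; first exact: perpv_graded.
  by case: eqP => _; [exact: gI | exact: graded_fullv].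
- have := cS i; have := cS j; rewrite /S eqxx eq_sym (negbTE ij) eqxx => cj ci.
  apply: (potential_tperm_eq0 (i := ord0) (j := i) hc).
  pose j1 := tperm ord0 i j.
  have j1_neq0 : j1 != ord0.
    by apply: contra ij => /eqP j1_0; rewrite -(tpermK ord0 i j) -/j1 j1_0 tpermL.
  have max_neq0 : ord_max != ord0 :> 'I_n.+1 by rewrite -val_eqE /= -lt0n.
  apply: (potential_tperm_eq0 (i := j1) (j := ord_max) (fun k => hc _)).
  apply: last_eq0; first by rewrite /= [tperm j1 _ _]tpermD // tpermL.
  by rewrite /= tpermR /j1 tpermK.
- by rewrite /S; case: eqP => [->|_] //; case: eqP => [->|_]; rewrite ?memvf.
Qed.

Lemma potential_orth_eq0 (X Y : {vspace V}) b (i : 'I_n.+1) :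
  graded X -> graded Y ->
  (forall x a, x \in X -> (forall k, a k \in Y) -> B x (m a) = 0) ->
  b i \in X -> (forall j, j != i -> b j \in Y) -> potential b = 0.
Proof.
move=> gX gY orthXY bi bj.
apply: (multilinear_eq0_homogeneous (S := fun l => if l == i then X else Y)
  potential_multilinear) => [l|pb c hc cS|l]; first by case: eqP.
  apply: (potential_tperm_eq0 (i := ord0) (j := i) hc).
  apply: orthXY => [|k]; first by have := cS i; rewrite eqxx /= tpermL.
  have := cS (tperm ord0 i (lift ord0 k)); case: eqP => //= /(congr1 (tperm ord0 i)).
  by rewrite tpermK tpermR => /eqP; rewrite eq_sym (negbTE (neq_lift _ _)).
by case: eqP => [->|/eqP] //; apply: bj.
Qed.

End Potential.

Lemma cnt_card k (t : 'I_k -> 'I_3) c : cnt t c = #|[set j | val (t j) == c]|.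
Proof.
rewrite /cnt -sum1_card [RHS]big_mkcond; apply: eq_bigr => j _.
by rewrite inE; case: (_ == _).
Qed.

Lemma dual_pattern_split n (t : 'I_n.+1 -> 'I_3) :
  (0 < cnt t 2)%N -> ~ (cnt t 2 = 1%N /\ cnt t 1 = n) ->
  exists i j, [/\ i != j, val (t i) = 2%N & val (t j) != 1%N].
Proof.
rewrite cnt_card => /card_gt0P [i]; rewrite inE => /eqP ti2 not_dual.
case: (boolP [exists j, (j != i) && (val (t j) != 1%N)]).
  by case/existsP => j /andP [ji tj1]; exists i, j; rewrite eq_sym.
rewrite negb_exists => /forallP others1; case: not_dual; rewrite !cnt_card.
have tj1 j : j != i -> val (t j) = 1%N.
  by move=> ji; have := others1 j; rewrite ji negbK => /eqP.
have -> : [set j | val (t j) == 2%N] = [set i].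
  by apply/setP => j; rewrite !inE; case: (eqVneq j i) => [->|/tj1 ->]; rewrite ?ti2.
have -> : [set j | val (t j) == 1%N] = [set~ i].
  by apply/setP => j; rewrite !inE; case: (eqVneq j i) => [->|/tj1 ->]; rewrite ?ti2.
by rewrite cards1 cardsC1 card_ord.
Qed.

Lemma pattern_all_but_one n (t : 'I_n.+1 -> 'I_3) :
  (n <= cnt t 1)%N -> exists i, forall j, j != i -> val (t j) = 1%N.
Proof.
rewrite cnt_card => cnt1.
case: (boolP [exists j, val (t j) != 1%N]); last first.
  rewrite negb_exists => /forallP all1.
  by exists ord0 => j _; have := all1 j; rewrite negbK => /eqP.
case/existsP => i ti1; exists i => j ji; apply/eqP; apply: contraNT (ti1) => tj1.
have : [set l | val (t l) == 1%N] \subset ~: [set i; j].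
  apply/subsetP => l; rewrite !inE => /eqP tl1.
  by apply/norP; split; apply/eqP => el; [move: ti1 | move: tj1]; rewrite -el tl1.
move/subset_leq_card => le_cnt.
have := cardsC [set i; j]; rewrite cards2 eq_sym ji card_ord; lia.
Qed.

Section Blocks.
Variables (K : fieldType) (pg qg ph qh : nat).
Local Notation G := (SV K pg qg).
Local Notation H := (SV K ph qh).
Local Notation D := (SV K (pg + (ph + ph)) (qg + (qh + qh))).

Definition dvec (x : G) (b a : H) : D :=
  (row_mx x.1 (row_mx b.1 a.1), row_mx x.2 (row_mx b.2 a.2)).

Lemma prG_dvec x b a : prG (dvec x b a) = x.
Proof. by case: x => ? ?; rewrite /prG /dvec /= !row_mxKl. Qed.
Lemma prH_dvec x b a : prH (dvec x b a) = b.
Proof. by case: b => ? ?; rewrite /prH /dvec /= !row_mxKr !row_mxKl. Qed.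
Lemma prHs_dvec x b a : prHs (dvec x b a) = a.
Proof. by case: a => ? ?; rewrite /prHs /dvec /= !row_mxKr. Qed.

Lemma dvec_pr (u : D) : dvec (prG u) (prH u) (prHs u) = u.
Proof. by case: u => u1 u2; rewrite /dvec /prG /prH /prHs /= !hsubmxK. Qed.

Lemma inG_dvec x : inG ph qh x = dvec x 0 0.
Proof. by rewrite /inG /dvec /= !row_mx0. Qed.
Lemma inH_dvec b : inH pg qg b = dvec 0 b 0.
Proof. by []. Qed.
Lemma inHs_dvec a : inHs pg qg a = dvec 0 0 a.
Proof. by []. Qed.

Lemma prG_inG (x : G) : prG (inG ph qh x) = x.
Proof. by rewrite inG_dvec prG_dvec. Qed.

Lemma dvec0 : dvec 0 0 0 = 0.
Proof. by rewrite /dvec /= !row_mx0. Qed.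

Lemma prG_is_linear : linear (@prG K pg qg ph qh).
Proof. by move=> c x y; apply: injective_projections; rewrite /= linearP. Qed.
Lemma prH_is_linear : linear (@prH K pg qg ph qh).
Proof. by move=> c x y; apply: injective_projections; rewrite /= !linearP. Qed.
Lemma prHs_is_linear : linear (@prHs K pg qg ph qh).
Proof. by move=> c x y; apply: injective_projections; rewrite /= !linearP. Qed.

Lemma inG_is_linear : linear (@inG K pg qg ph qh).
Proof.
by move=> c x y; apply: injective_projections; rewrite /= scale_row_mx add_row_mx scaler0 addr0.
Qed.
Lemma inH_is_linear : linear (@inH K pg qg ph qh).
Proof.
move=> c x y; apply: injective_projections;
  by rewrite /= !scale_row_mx !add_row_mx !scaler0 !addr0.
Qed.

Lemma hom_inG b (x : G) : hom b x -> hom b (inG ph qh x).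
Proof. by case: b => /eqP x0; rewrite /hom /= x0 row_mx0. Qed.
Lemma hom_inH b (x : H) : hom b x -> hom b (inH pg qg x).
Proof. by case: b => /eqP x0; rewrite /hom /= x0 !row_mx0. Qed.
Lemma hom_prG b (u : D) : hom b u -> hom b (prG u).
Proof. by case: b => /eqP u0; rewrite /hom /= u0 linear0. Qed.
Lemma hom_prH b (u : D) : hom b u -> hom b (prH u).
Proof. by case: b => /eqP u0; rewrite /hom /= u0 !linear0. Qed.
Lemma hom_prHs b (u : D) : hom b u -> hom b (prHs u).
Proof. by case: b => /eqP u0; rewrite /hom /= u0 !linear0. Qed.

Lemma dotr0r k (u : 'rV[K]_k) : dotr u 0 = 0.
Proof. by rewrite /dotr trmx0 mulmx0 mxE. Qed.
Lemma dotr0l k (u : 'rV[K]_k) : dotr 0 u = 0.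
Proof. by rewrite /dotr mul0mx mxE. Qed.

Lemma dform_inG (Bg : G -> G -> K) x (v : D) : dform Bg (inG ph qh x) v = Bg x (prG v).
Proof.
by rewrite inG_dvec /dform prG_dvec prH_dvec prHs_dvec /pairing /= !dotr0l !dotr0r oppr0 !addr0.
Qed.

Lemma dform_inHs (Bg : G -> G -> K) a (v : D) :
  dform Bg (inHs pg qg a) v = Bg 0 (prG v) + pairing a (prH v).
Proof. by rewrite inHs_dvec /dform prG_dvec prH_dvec prHs_dvec /= !dotr0r oppr0 !addr0. Qed.

End Blocks.

Section Transport.
Variables (K : fieldType) (n p q p' q' : nat).
Local Notation V := (SV K p q).
Local Notation V' := (SV K p' q').

Lemma comm_alg_restrict (md : ('I_n -> V) -> V) (iota : V' -> V) (pi : V -> V') :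
  linear iota -> linear pi -> (forall b x, hom b x -> hom b (iota x)) ->
  comm_alg md -> comm_alg (fun a => pi (md (iota \o a))).
Proof.
move=> iota_lin pi_lin iota_hom [hM hC].
have iota_upd a i z : iota \o upd a i z = upd (iota \o a) i (iota z).
  by apply: functional_extensionality => j; rewrite /= /upd; case: eqP.
split=> [a i c x y | pa a ha i j ij] /=; first by rewrite !iota_upd iota_lin hM pi_lin.
by rewrite (hC _ _ (fun k => iota_hom _ _ (ha k)) i j ij) linear_funZ.
Qed.

Lemma comm_inv_alg_transport (B : V -> V -> K) (m : ('I_n -> V) -> V) (B' : V' -> V' -> K)
  (phi : V' -> V) (psi : V -> V') :
  linear phi -> cancel phi psi -> cancel psi phi ->
  (forall b x, hom b x -> hom b (phi x)) -> (forall x y, B' x y = B (phi x) (phi y)) ->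
  comm_inv_alg B m -> comm_inv_alg B' (fun a => psi (m (phi \o a))).
Proof.
move=> phi_lin phiK psiK phi_hom B'E [[hB hE hS hN] hA hI].
have psi_lin : linear psi.
  by move=> c x y; apply: (can_inj phiK); rewrite phi_lin !psiK.
split; [split|exact: comm_alg_restrict phi_lin psi_lin phi_hom hA|].
- by split=> [x c y z|z c x y]; rewrite !B'E phi_lin; [exact: hB.1 | exact: hB.2].
- by move=> x y hx hy; rewrite !B'E; apply: hE; apply: phi_hom.
- by move=> ba bb x y hx hy; rewrite !B'E; apply: hS; apply: phi_hom.
- move=> x x0; rewrite -[x]phiK (_ : phi x = 0) ?linear_fun0 //.
  by apply: hN => v; rewrite -[v]psiK -B'E x0.
- by move=> pb b hb /=; rewrite !B'E !psiK; exact: (hI _ _ (fun k => phi_hom _ _ (hb k))).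
Qed.

End Transport.

Lemma comm_inv_alg_restrict_inG (K : fieldType) (n pg qg ph qh : nat)
  (Bg : SV K pg qg -> SV K pg qg -> K)
  (md : ('I_n -> SV K (pg + (ph + ph)) (qg + (qh + qh))) ->
        SV K (pg + (ph + ph)) (qg + (qh + qh))) :
  comm_inv_alg (dform Bg) md -> comm_inv_alg Bg (fun a => prG (md (inG ph qh \o a))).
Proof.
move=> [[hB hE hS hN] hA hI].
have BgE x y : Bg x y = dform Bg (inG ph qh x) (inG ph qh y) by rewrite dform_inG prG_inG.
split; [split| |].
- by split=> [x c y z|z c x y]; rewrite !BgE inG_is_linear; [exact: hB.1 | exact: hB.2].
- by move=> x y hx hy; rewrite !BgE; apply: hE; apply: hom_inG.
- by move=> ba bb x y hx hy; rewrite !BgE; apply: hS; apply: hom_inG.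
- move=> x x0; rewrite -(prG_inG ph qh x) (_ : inG ph qh x = 0) ?linear_fun0 //.
    exact: prG_is_linear.
  by apply: hN => v; rewrite dform_inG x0.
- exact: comm_alg_restrict (@inG_is_linear _ _ _ _ _) (@prG_is_linear _ _ _ _ _)
    (@hom_inG _ _ _ _ _) hA.
- by move=> pb b hb /=; rewrite -!dform_inG; exact: (hI _ _ (fun k => hom_inG _ _ (hb k))).
Qed.

Section Ideals.
Variables (K : fieldType) (p q n : nat).
Local Notation V := (SV K p q).
Variables (B : V -> V -> K) (m : ('I_n -> V) -> V).

Lemma idealD (S T : {vspace V}) : multilinear m -> ideal m S -> ideal m T -> ideal m (S + T)%VS.
Proof.
move=> hM [gS idS] [gT idT]; split=> [|a a_last]; first exact: gradedD.
have [/existsP [l /eqP ln] | ] := boolP [exists l : 'I_n, val l == n.-1]; last first.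
  rewrite negb_exists => /forallP no_last.
  rewrite -[m a]addr0 memv_add ?mem0v // idS // => i /eqP il.
  by have := no_last i; rewrite il.
have /memv_addP [u uS [v vT al]] := a_last l ln.
have upd_last x i : val i = n.-1 -> upd a l x i = x.
  by move=> il; rewrite /upd (_ : i = l) ?eqxx //; apply: val_inj; rewrite il ln.
rewrite -(upd_id a l) al -[u]scale1r hM scale1r.
by rewrite memv_add // ?idS ?idT // => i /upd_last ->.
Qed.

Hypothesis hn : (0 < n)%N.
Hypothesis hF : superform B.
Hypothesis hA : comm_alg m.
Hypothesis hI : invariant B m.

Lemma perpv_ideal (I : {vspace V}) : ideal m I -> ideal m (perpv B I).
Proof.
have [hB hE hS _] := hF; have [hM hC] := hA.
move=> idI; have gI := idI.1.
split=> [|a a_last]; first exact: perpv_graded.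
apply/(perpvP hB) => s sI; apply: (orthr_of_orthl hB hE hS gI _ sI) => t tI.
pose b k := if unlift ord0 k is Some k' then a k' else t.
have -> : B t (m a) = potential B m b.
  rewrite /potential /b unlift_none; congr (B t (m _)).
  by apply: functional_extensionality => k; rewrite /tl liftK.
apply: (potential_perp_ideal_eq0 hB hC hI hM hE (I := I) (i := ord_max) (j := ord0) hn idI).
- by apply/eqP => /(congr1 val) /=; lia.
- rewrite /b; case: unliftP => [k ek|]; last by move/(congr1 val) => /=; lia.
  by apply: a_last; move: ek => /(congr1 val) /=; rewrite /bump /=; lia.
- by rewrite /b unlift_none.
Qed.

Lemma perpv_sub_maximal (I : {vspace V}) :
  irreducible_alg B m -> maximal_nontrivial_ideal m I -> (perpv B I <= I)%VS.
Proof.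
have [hB hE hS hN] := hF.
move=> irr [[idI I_neq0 I_neq_full] I_max]; have gI := idI.1.
set F := perpv B I.
have idF : ideal m F by apply: perpv_ideal.
have [IF_eq | IF_full] := I_max _ (idealD hA.1 idI idF) (addvSl I F).
  by rewrite -[X in (_ <= X)%VS]IF_eq addvSr.
have FI x y : x \in F -> y \in I -> B x y = 0 /\ B y x = 0.
  by move=> xF yI; split; [apply: (elimT (perpvP hB _ _) xF) | apply: (perpv_orthl hB hE hS gI xF)].
have split_full y : exists2 u, u \in I & exists2 v, v \in F & y = u + v.
  have /memv_addP [u uI [v vF ->]] : y \in (I + F)%VS by rewrite IF_full memvf.
  by exists u => //; exists v.
case: irr; exists I, F; split => //.
- split=> //; apply: contra I_neq_full => /eqP F0; rewrite eqEdim subvf /=.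
  by have := dim_perpv hB hN I; rewrite -/F F0 dimv0 => /esym/eqP; rewrite subn_eq0.
- apply/eqP; rewrite -subv0; apply/subvP => x /memv_capP [xI xF]; rewrite memv0.
  apply/eqP/hN => y; have [u uI [v vF ->]] := split_full y.
  by rewrite formDr // (FI _ _ xF uI).1 (FI _ _ vF xI).2 addr0.
- split=> x xS x_orth; apply: hN => y; have [u uI [v vF ->]] := split_full y; rewrite formDr //.
    by rewrite x_orth // (FI _ _ vF xS).2 addr0.
  by rewrite (FI _ _ xS uI).1 x_orth // add0r.
Qed.

End Ideals.

Lemma dotrE (K : fieldType) k (u v : 'rV[K]_k) : dotr u v = \sum_i u 0 i * v 0 i.
Proof. by rewrite /dotr mxE; apply: eq_bigr => i _; rewrite mxE. Qed.

Section Decomposition.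
Variables (K : fieldType) (p q pg qg ph qh : nat).
Local Notation V := (SV K p q).
Local Notation G := (SV K pg qg).
Local Notation H := (SV K ph qh).
Local Notation D := (SV K (pg + (ph + ph)) (qg + (qh + qh))).
Variable B : V -> V -> K.
Hypotheses (hB : bilinear_form B) (hE : even_form B) (hS : superskew B).
Variables (F h : {vspace V}).
Variables (ge : 'I_pg -> V) (go : 'I_qg -> V).
Variables (he fe : 'I_ph -> V) (ho fo : 'I_qh -> V).

Definition decomposition :=
  [/\ homogeneous_basis he ho h, homogeneous_basis fe fo F,
      homogeneous_basis ge go (perpv B (F + h)), dual_families B fe he fo ho &
      isotropic B h /\ isotropic B F].

Hypothesis dec : decomposition.

Let h_basis : homogeneous_basis he ho h. Proof. by case: dec. Qed.
Let F_basis : homogeneous_basis fe fo F. Proof. by case: dec. Qed.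
Let G_basis : homogeneous_basis ge go (perpv B (F + h)). Proof. by case: dec. Qed.
Let dual : dual_families B fe he fo ho. Proof. by case: dec. Qed.
Let h_iso : isotropic B h. Proof. by case: dec => _ _ _ _ []. Qed.
Let F_iso : isotropic B F. Proof. by case: dec => _ _ _ _ []. Qed.

Local Notation gvec x := (scomb x ge go).
Local Notation hvec b := (scomb b he ho).
Local Notation fvec a := (scomb a fe fo).

(* The h^*-coordinates [prHs u] are read in F, in the basis dual to that of h. *)
Definition dmap (u : D) : V := gvec (prG u) + hvec (prH u) + fvec (prHs u).

Definition gform (x y : G) : K := B (gvec x) (gvec y).

Let he_h i : he i \in h. Proof. by case: h_basis => /(_ i) []. Qed.
Let ho_h i : ho i \in h. Proof. by case: h_basis => _ /(_ i) []. Qed.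
Let fe_F i : fe i \in F. Proof. by case: F_basis => /(_ i) []. Qed.
Let fo_F i : fo i \in F. Proof. by case: F_basis => _ /(_ i) []. Qed.
Let he_even i : hom false (he i). Proof. by case: h_basis => /(_ i) []. Qed.
Let ho_odd i : hom true (ho i). Proof. by case: h_basis => _ /(_ i) []. Qed.

Let hvec_h b : hvec b \in h. Proof. exact: memv_scomb. Qed.
Let fvec_F a : fvec a \in F. Proof. exact: memv_scomb. Qed.
Let gvec_G x : gvec x \in perpv B (F + h).
Proof.
by case: G_basis => geG goG _ _; apply: memv_scomb => i; [case: (geG i) | case: (goG i)].
Qed.

Let graded_Fh : graded (F + h)%VS.
Proof. exact: gradedD (homogeneous_basis_graded F_basis) (homogeneous_basis_graded h_basis). Qed.

Lemma gvec_orthl x y : y \in (F + h)%VS -> B (gvec x) y = 0.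
Proof. exact: (elimT (perpvP hB _ _) (gvec_G x)). Qed.
Lemma gvec_orthr x y : y \in (F + h)%VS -> B y (gvec x) = 0.
Proof. by move=> yFh; apply: (perpv_orthl hB hE hS graded_Fh (gvec_G x)). Qed.

Lemma fvec_he a j : B (fvec a) (he j) = a.1 0 j.
Proof. exact: (form_scomb_dual hB a dual).1. Qed.
Lemma fvec_ho a j : B (fvec a) (ho j) = a.2 0 j.
Proof. exact: (form_scomb_dual hB a dual).2. Qed.

Lemma hvec_fe b j : B (hvec b) (fe j) = - b.1 0 j.
Proof.
case: dual => dual_e _ fe_ho _; rewrite form_scombl //.
under eq_bigr => i _ do rewrite (form_even_skew hB hE hS _ (he_even i)) dual_e eq_sym mulrN.
rewrite sumrN sum_row_delta big1 ?addr0 // => i _.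
by rewrite (form_odd_sym hB hE hS _ (ho_odd i)) fe_ho mulr0.
Qed.
Lemma hvec_fo b j : B (hvec b) (fo j) = b.2 0 j.
Proof.
case: dual => _ dual_o _ fo_he; rewrite form_scombl //.
under [X in _ + X]eq_bigr => i _ do rewrite (form_odd_sym hB hE hS _ (ho_odd i)) dual_o eq_sym.
rewrite sum_row_delta big1 ?add0r // => i _.
by rewrite (form_even_skew hB hE hS _ (he_even i)) fo_he oppr0 mulr0.
Qed.

Lemma fvec_hvec a b : B (fvec a) (hvec b) = pairing a b.
Proof.
rewrite form_scombr // /pairing !dotrE.
by congr (_ + _); apply: eq_bigr => i _; rewrite ?fvec_he ?fvec_ho mulrC.
Qed.

Lemma hvec_fvec b a : B (hvec b) (fvec a) = - dotr a.1 b.1 + dotr a.2 b.2.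
Proof.
rewrite form_scombr // !dotrE -sumrN.
by congr (_ + _); apply: eq_bigr => i _; rewrite ?hvec_fe ?hvec_fo ?mulrN.
Qed.

Lemma dmap_dvec x b a : dmap (dvec x b a) = gvec x + hvec b + fvec a.
Proof. by rewrite /dmap prG_dvec prH_dvec prHs_dvec. Qed.

Lemma dmap_inG x : dmap (inG ph qh x) = gvec x.
Proof. by rewrite inG_dvec dmap_dvec !scomb0 !addr0. Qed.
Lemma dmap_inH b : dmap (inH pg qg b) = hvec b.
Proof. by rewrite inH_dvec dmap_dvec !scomb0 addr0 add0r. Qed.
Lemma dmap_inHs a : dmap (inHs pg qg a) = fvec a.
Proof. by rewrite inHs_dvec dmap_dvec !scomb0 !add0r. Qed.

Lemma mem_dmap_inG x : dmap (inG ph qh x) \in perpv B (F + h).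
Proof. by rewrite dmap_inG. Qed.
Lemma mem_dmap_inH b : dmap (inH pg qg b) \in h.
Proof. by rewrite dmap_inH. Qed.
Lemma mem_dmap_inHs a : dmap (inHs pg qg a) \in F.
Proof. by rewrite dmap_inHs. Qed.

Lemma dmap_is_linear : linear dmap.
Proof.
move=> c u v; rewrite /dmap prG_is_linear prH_is_linear prHs_is_linear !scomb_is_linear.
move: (gvec (prG u)) (gvec (prG v)) (hvec (prH u)) (hvec (prH v)) (fvec (prHs u)) (fvec (prHs v)).
by move=> x1 x2 y1 y2 z1 z2; rewrite !scalerDr (addrACA (c *: x1)) (addrACA (c *: x1 + c *: y1)).
Qed.

Lemma hom_dmap b u : hom b u -> hom b (dmap u).
Proof.
have [geG goG _ _] := G_basis; have [feF foF _ _] := F_basis.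
move=> hu; rewrite /dmap; apply: homD; first apply: homD.
- by apply: hom_scomb (hom_prG hu) => i; [case: (geG i) | case: (goG i)].
- exact: hom_scomb (hom_prH hu).
- by apply: hom_scomb (hom_prHs hu) => i; [case: (feF i) | case: (foF i)].
Qed.

Let Fh_F y : y \in F -> y \in (F + h)%VS. Proof. exact: (subvP (addvSl F h)). Qed.
Let Fh_h y : y \in h -> y \in (F + h)%VS. Proof. exact: (subvP (addvSr F h)). Qed.

Lemma form_dmap u v : B (dmap u) (dmap v) = dform gform u v.
Proof.
rewrite -[u]dvec_pr -[v]dvec_pr dmap_dvec dmap_dvec /dform !prG_dvec !prH_dvec !prHs_dvec.
move: (prG u) (prH u) (prHs u) (prG v) (prH v) (prHs v) => x b a y b' a'.
have form3 x1 x2 x3 y1 y2 y3 : B (x1 + x2 + x3) (y1 + y2 + y3) =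
    B x1 y1 + B x1 y2 + B x1 y3 + (B x2 y1 + B x2 y2 + B x2 y3) +
    (B x3 y1 + B x3 y2 + B x3 y3) by rewrite !formDl // !formDr.
rewrite form3 (gvec_orthl _ (Fh_h (hvec_h b'))) (gvec_orthl _ (Fh_F (fvec_F a'))).
rewrite (gvec_orthr _ (Fh_h (hvec_h b))) (gvec_orthr _ (Fh_F (fvec_F a))).
rewrite (h_iso (hvec_h b) (hvec_h b')) (F_iso (fvec_F a) (fvec_F a')).
rewrite fvec_hvec hvec_fvec /gform.
ring.
Qed.

Let form3l x1 x2 x3 y : B (x1 + x2 + x3) y = B x1 y + B x2 y + B x3 y.
Proof. by rewrite !formDl. Qed.

Lemma dmap_he u j : B (dmap u) (he j) = (prHs u).1 0 j.
Proof.
rewrite /dmap form3l (gvec_orthl _ (Fh_h (he_h j))) (h_iso (hvec_h _) (he_h j)).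
by rewrite fvec_he !add0r.
Qed.
Lemma dmap_ho u j : B (dmap u) (ho j) = (prHs u).2 0 j.
Proof.
rewrite /dmap form3l (gvec_orthl _ (Fh_h (ho_h j))) (h_iso (hvec_h _) (ho_h j)).
by rewrite fvec_ho !add0r.
Qed.
Lemma dmap_fe u j : B (dmap u) (fe j) = - (prH u).1 0 j.
Proof.
rewrite /dmap form3l (gvec_orthl _ (Fh_F (fe_F j))) (F_iso (fvec_F _) (fe_F j)).
by rewrite hvec_fe add0r addr0.
Qed.
Lemma dmap_fo u j : B (dmap u) (fo j) = (prH u).2 0 j.
Proof.
rewrite /dmap form3l (gvec_orthl _ (Fh_F (fo_F j))) (F_iso (fvec_F _) (fo_F j)).
by rewrite hvec_fo add0r addr0.
Qed.

Lemma dmap_eq0 u : dmap u = 0 -> u = 0.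
Proof.
move=> u0; have [_ _ _ G_free] := G_basis.
have coord0 k (r : 'rV[K]_k) : (forall j, r 0 j = 0) -> r = 0.
  by move=> r0; apply/rowP => j; rewrite mxE r0.
have prHs0 : prHs u = 0.
  by apply: injective_projections; apply: coord0 => j; rewrite -?dmap_he -?dmap_ho u0 form0l.
have prH0 : prH u = 0.
  apply: injective_projections; apply: coord0 => j; last by rewrite -dmap_fo u0 form0l.
  by apply/eqP; rewrite -oppr_eq0 -dmap_fe u0 form0l.
have prG0 : prG u = 0 by apply: G_free; rewrite -u0 /dmap prH0 prHs0 !scomb0 !addr0.
by rewrite -[u]dvec_pr prG0 prH0 prHs0 dvec0.
Qed.

Lemma dmap_inj : injective dmap.
Proof.
move=> u v e; apply/eqP; rewrite -subr_eq0; apply/eqP/dmap_eq0.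
by rewrite addrC -scaleN1r dmap_is_linear scaleN1r e addNr.
Qed.

Lemma dmap_surj v : exists u, dmap u = v.
Proof.
have [_ _ h_span _] := h_basis; have [_ _ F_span _] := F_basis.
have [_ _ G_span _] := G_basis.
pose a : H := (\row_j B v (he j), \row_j B v (ho j)).
pose v1 := v - fvec a.
pose b : H := (\row_j - B v1 (fe j), \row_j B v1 (fo j)).
pose v2 := v1 - hvec b.
have v2G : v2 \in perpv B (F + h).
  apply/(perpvP hB) => _ /memv_addP [_ /F_span [z <-] [_ /h_span [z' <-] ->]].
  rewrite formDr // !form_scombr // !big1 ?addr0 // => j _; apply/eqP; rewrite mulf_eq0 orbC.
  - by rewrite /v2 /v1 !formBl // fvec_ho (h_iso (hvec_h b) (ho_h j)) mxE subrr subr0 eqxx.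
  - by rewrite /v2 /v1 !formBl // fvec_he (h_iso (hvec_h b) (he_h j)) mxE subrr subr0 eqxx.
  - by rewrite /v2 formBl // hvec_fo mxE subrr eqxx.
  - by rewrite /v2 formBl // hvec_fe mxE !opprK subrr eqxx.
have [x ex] := G_span v2 v2G.
by exists (dvec x b a); rewrite dmap_dvec ex /v2 /v1 !subrK.
Qed.

Lemma dmap_bij : bijective dmap.
Proof. exact: inj_surj_bij dmap_inj dmap_surj. Qed.

End Decomposition.

Section DoubleExtension.
Variables (K : fieldType) (n p q pg qg ph qh : nat).
Local Notation V := (SV K p q).
Local Notation G := (SV K pg qg).
Local Notation H := (SV K ph qh).
Local Notation D := (SV K (pg + (ph + ph)) (qg + (qh + qh))).
Variables (B : V -> V -> K) (m : ('I_n -> V) -> V).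
Variables (I h : {vspace V}) (Bg : G -> G -> K) (phi : D -> V) (psi : V -> D).

Hypothesis hn : (0 < n)%N.
Hypothesis hA : comm_inv_alg B m.
Hypothesis idI : ideal m I.
Hypothesis perpI_sub : (perpv B I <= I)%VS.
Hypothesis h_sub : subalgebra m h.
Hypothesis h_iso : isotropic B h.
Hypothesis phi_lin : linear phi.
Hypotheses (phiK : cancel phi psi) (psiK : cancel psi phi).
Hypothesis phi_hom : forall b x, hom b x -> hom b (phi x).
Hypothesis phi_iso : forall u v, B (phi u) (phi v) = dform Bg u v.
Hypothesis phi_inG : forall x, phi (inG ph qh x) \in perpv B (perpv B I + h).
Hypothesis phi_inH : forall b, phi (inH pg qg b) \in h.
Hypothesis phi_inHs : forall a, phi (inHs pg qg a) \in perpv B I.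

Local Notation Gs := (perpv B (perpv B I + h)).

Let Gs_sub : (Gs <= I)%VS.
Proof.
have [[hB hE hS hN] _ _] := hA.
apply/subvP => x /(perpvP hB) x_perp; rewrite -(perpvK hB hN hE hS idI.1).
by apply/(perpvP hB) => f fF; rewrite x_perp // (subvP (addvSl _ h)).
Qed.

Let Gs_h g y : g \in Gs -> y \in h -> B g y = 0.
Proof.
have [[hB _ _ _] _ _] := hA.
by move=> /(perpvP hB) g_perp yh; rewrite g_perp // (subvP (addvSr _ h)).
Qed.

Let gGs : graded Gs.
Proof.
have [[hB hE _ _] _ _] := hA.
have gIh := gradedD (perpv_graded hB hE idI.1) h_sub.1.
by have := perpv_graded hB hE gIh.
Qed.

Definition md (a : 'I_n -> D) : D := psi (m (phi \o a)).

Lemma potD_md b : potD Bg md b = potential B m (phi \o b).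
Proof. by rewrite /potD -phi_iso /md psiK. Qed.

Lemma comm_inv_alg_md : comm_inv_alg (dform Bg) md.
Proof. by apply: comm_inv_alg_transport phi_lin phiK psiK phi_hom _ hA => x y; rewrite phi_iso. Qed.

Lemma md_dual_patterns (t : 'I_n.+1 -> 'I_3) xg xh xs :
  (0 < cnt t 2)%N -> ~ (cnt t 2 = 1%N /\ cnt t 1 = n) ->
  potD Bg md (fun j => compD (t j) (xg j) (xh j) (xs j)) = 0.
Proof.
have [[hB hE _ _] [hM hC] hI] := hA.
move=> t2 not_dual; have [i [j [ij ti tj]]] := dual_pattern_split t2 not_dual.
rewrite potD_md; apply: (potential_perp_ideal_eq0 hB hC hI hM hE hn idI ij).
  by rewrite /= /compD ti /=.
rewrite /= /compD; case: ifP => _; first exact: subvP Gs_sub _ (phi_inG _).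
by rewrite ifN; [exact: subvP perpI_sub _ (phi_inHs _) | exact: tj].
Qed.

Lemma md_psi_vanish k : (n <= k)%N -> psi_vanish Bg md k.
Proof.
have [[hB hE hS _] [hM hC] hI] := hA.
move=> nk t xg xh xs t2 t1.
have [i others_h] : exists i, forall j, j != i -> val (t j) = 1%N.
  by apply: pattern_all_but_one; rewrite t1.
have ti2 : val (t i) != 2%N.
  apply/eqP => ti; move: t2; rewrite cnt_card => /eqP; rewrite cards_eq0 => /eqP t2_0.
  by have := in_set0 i; rewrite -t2_0 inE ti.
rewrite potD_md; apply: (potential_orth_eq0 hB hC hI hM (X := (Gs + h)%VS) (Y := h) (i := i)).
- exact: gradedD gGs h_sub.1.
- exact: h_sub.1.
- move=> _ a /memv_addP [g g_Gs [w wh ->]] ah; have mah := h_sub.2 a ah.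
  by rewrite formDl // Gs_h // h_iso // addr0.
- rewrite /= /compD; move: (t i) ti2 => -[[|[|[|?]]] ?] //= _.
    by rewrite -[phi _]addr0 memv_add ?phi_inG ?mem0v.
  by rewrite -[phi _]add0r memv_add ?mem0v ?phi_inH.
- by move=> j ji; rewrite /= /compD (others_h j ji) phi_inH.
Qed.

Lemma double_ext_md :
  double_ext Bg (fun a => prG (md (inG ph qh \o a)))
    (fun a => prH (md (@inH K pg qg ph qh \o a))) md.
Proof.
have hmd := comm_inv_alg_md; have [_ hAd _] := hmd.
have hBg := comm_inv_alg_restrict_inG hmd; have [[hBgB _ _ _] _ _] := hBg.
split; [split; [split | exact: hmd | | | exact: md_dual_patterns] | |]; last 2 first.
- exact: md_psi_vanish.
- exact: md_psi_vanish.
- exact: hBg.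
- exact: comm_alg_restrict (@inH_is_linear _ _ _ _ _) (@prH_is_linear _ _ _ _ _)
    (@hom_inH _ _ _ _ _) hAd.
- by move=> x; rewrite /potD dform_inG.
- by move=> a y; rewrite dform_inHs form0l // add0r.
Qed.

End DoubleExtension.

Lemma complement_dual_bases (K : fieldType) (p q : nat) (B : SV K p q -> SV K p q -> K)
  (I h : {vspace SV K p q}) :
  superform B -> graded I -> graded h -> (I + h)%VS = fullv -> (I :&: h)%VS = 0%VS ->
  exists ph qh (he fe : 'I_ph -> SV K p q) (ho fo : 'I_qh -> SV K p q),
    [/\ homogeneous_basis he ho h, homogeneous_basis fe fo (perpv B I)
      & dual_families B fe he fo ho].
Proof.
move=> [hB hE hS hN] gI gh Ih_full Ih0.
have [ph [qh [he [ho [h_basis dim_h]]]]] := homogeneous_basis_exists gh.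
have [heP hoP h_span _] := h_basis.
have dim_perpI : (ph + qh)%N = \dim (perpv B I).
  by rewrite dim_perpv // -Ih_full dimv_disjoint_sum // dim_h addKn.
have perpI_h_nondeg f : f \in perpv B I ->
    (forall j, B f (he j) = 0) -> (forall j, B f (ho j) = 0) -> f = 0.
  move=> fI f_he f_ho; apply: hN => y.
  have /memv_addP [u uI [_ /h_span [z <-] ->]] : y \in (I + h)%VS by rewrite Ih_full memvf.
  rewrite formDr // (elimT (perpvP hB _ _) fI _ uI) form_scombr // !big1 ?addr0 // => j _.
    by rewrite f_ho mulr0.
  by rewrite f_he mulr0.
have [fe [fo [F_basis dual]]] := dual_basis_exists hB perpI_h_nondeg hE
  (fun i => (heP i).2) (fun i => (hoP i).2) (perpv_graded hB hE gI) dim_perpI.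
by exists ph, qh, he, fe, ho, fo.
Qed.

Lemma decomposition_exists (K : fieldType) (p q : nat) (B : SV K p q -> SV K p q -> K)
  (I h : {vspace SV K p q}) :
  superform B -> graded I -> graded h -> isotropic B h -> (perpv B I <= I)%VS ->
  (I + h)%VS = fullv -> (I :&: h)%VS = 0%VS ->
  exists pg qg ph qh (ge : 'I_pg -> SV K p q) (go : 'I_qg -> SV K p q)
    (he fe : 'I_ph -> SV K p q) (ho fo : 'I_qh -> SV K p q),
    decomposition B (perpv B I) h ge go he fe ho fo.
Proof.
move=> hF gI gh h_iso perpI_sub Ih_full Ih0; have [hB hE _ _] := hF.
have [ph [qh [he [fe [ho [fo [h_basis F_basis dual]]]]]]] :=
  complement_dual_bases hF gI gh Ih_full Ih0.
have gFh := gradedD (homogeneous_basis_graded F_basis) gh.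
have [pg [qg [ge [go [G_basis _]]]]] := homogeneous_basis_exists (perpv_graded hB hE gFh).
exists pg, qg, ph, qh, ge, go, he, fe, ho, fo; split => //; split => //.
by move=> x y /(perpvP hB) xF yF; apply/xF/(subvP perpI_sub).
Qed.

Theorem corollary1 (K : numFieldType) (n p q : nat) (hn : (0 < n)%N)
  (B : SV K p q -> SV K p q -> K) (m : ('I_n -> SV K p q) -> SV K p q)
  (I h : {vspace SV K p q}) :
  comm_inv_alg B m ->
  irreducible_alg B m ->
  ~ simple_alg m ->
  maximal_nontrivial_ideal m I ->
  subalgebra m h -> isotropic B h ->
  (I + h)%VS = fullv -> (I :&: h)%VS = 0%VS ->
  exists (pg qg ph qh : nat)
         (Bg : SV K pg qg -> SV K pg qg -> K)
         (mg : ('I_n -> SV K pg qg) -> SV K pg qg)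
         (nu : ('I_n -> SV K ph qh) -> SV K ph qh)
         (md : ('I_n -> SV K (pg + (ph + ph)) (qg + (qh + qh))) ->
                SV K (pg + (ph + ph)) (qg + (qh + qh)))
         (phi : SV K (pg + (ph + ph)) (qg + (qh + qh)) -> SV K p q),
    [/\ double_ext Bg mg nu md,
        alg_iso (dform Bg) md B m phi,
        (forall x, phi (inH pg qg x) \in h) &
        (forall y, y \in h -> exists x, phi (inH pg qg x) = y)].
Proof.
move=> hA irr _ maxI h_sub h_iso Ih_full Ih0.
have [hF [hM hC] hI] := hA; have [[idI _ _] _] := maxI.
have perpI_sub := perpv_sub_maximal hn hF (conj hM hC) hI irr maxI.
have [pg [qg [ph [qh [ge [go [he [fe [ho [fo dec]]]]]]]]]] :=
  decomposition_exists hF idI.1 h_sub.1 h_iso perpI_sub Ih_full Ih0.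
have [hB hE hS _] := hF.
have [psi phiK psiK] := dmap_bij hB hE hS dec.
pose phi := dmap ge go he fe ho fo; pose mD := md m phi psi.
exists pg, qg, ph, qh, (gform B ge go), (fun a => prG (mD (inG ph qh \o a))).
exists (fun a => prH (mD (@inH K pg qg ph qh \o a))), mD, phi; split.
- exact: double_ext_md hn hA idI perpI_sub h_sub h_iso (dmap_is_linear _ _ _ _ _ _) phiK psiK
    (hom_dmap dec) (form_dmap hB hE hS dec) (mem_dmap_inG dec) (mem_dmap_inH dec)
    (mem_dmap_inHs dec).
- split; [exact: dmap_is_linear | by exists psi | exact: hom_dmap dec | |].
    by move=> a; apply: psiK.
  by move=> u v; rewrite /phi (form_dmap hB hE hS dec).
- exact: mem_dmap_inH dec.
- by case: dec => -[_ _ h_span _] _ _ _ _ y /h_span [x <-]; exists x; rewrite /phi dmap_inH.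
Qed.
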